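(* Under the time evolution $T_\infty$, the basic solitons are exactly: (1) the words $F_k=F F\cdots F$ ($k$ letters, $k\ge1$), which are solitons of speed $k$ (called fast solitons); (2) the nonempty words in the letters $F$, $B_a$, $U_a$ ($a\geq1$) which contain neither $FF$ nor $FU_a$ (for any $a$) as a pair of consecutive letters; these are solitons of speed $1$ (called slow solitons).
   Context: Box-basket-ball system (BBBS). A site state is a triple $(a,b,c)$ of nonnegative integers with $a=b-c+1$ (one box, $b$ baskets, $c$ balls; each box/basket holds at most one ball, balls placed in the box first). Write $V=(1,0,0)$, $F=(0,0,1)$, $B_a=(a+1,a,0)$, $U_a=(a,a,1)$ for $a\ge1$. A state is a sequence $(S_i)_{i\in\mathbb Z}$ of site states with $S_i=V$ for all but finitely many $i$. The time evolution $T_\infty$: first every empty basket (there are $\min(a_i,b_i)$ at site $i$) is moved from site $i$ to site $i+1$, full baskets staying; then the balls are taken one at a time from left to right, and each is moved to the nearest currently unoccupied box or basket at a site strictly to its right (each ball moves exactly once). Solitons: for a finite word $A=A_1\cdots A_n$ of site states and $p\in\mathbb Z$, ''$A$ at $p$'' is the state with $S_{p+j-1}=A_j$ for $1\le j\le n$ and $S_i=V$ otherwise. A word $A$ with $A_1\ne V\ne A_n$ is a soliton of speed $v\ge1$ (for a time evolution $T$) if $T$ maps $A$ at $p$ to $A$ at $p+v$ for all $p$. A soliton $A$ of speed $v$ is basic if it cannot be written as $A=A'V^jA''$ with $A',A''$ nonempty solitons and $j\ge v$. *)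

From HB Require Import structures.
From mathcomp Require Import all_boot all_order all_algebra.
Set Implicit Arguments. Unset Strict Implicit. Unset Printing Implicit Defensive.
Import Order.TTheory GRing.Theory Num.Theory.

Definition site := (nat * nat * nat)%type.
Definition sa (s : site) : nat := s.1.1.
Definition sb (s : site) : nat := s.1.2.
Definition sc (s : site) : nat := s.2.
Definition wf_site (s : site) : bool := sa s + sc s == sb s + 1.

Definition V : site := (1, 0, 0).
Definition F : site := (0, 0, 1).
Definition B (a : nat) : site := (a.+1, a, 0).
Definition U (a : nat) : site := (a, a, 1).

Definition at_ (A : seq site) (p : int) : int -> site :=
  fun i => if ((p <= i)%R && (i < p + (size A)%:Z)%R) then nth V A (absz (i - p)%R)
           else V.

(** Step 1 of T_infty: every empty basket (min(a,b) of them at a site) moves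
    one site to the right; full baskets, boxes and balls stay. *)
Fixpoint basket_move (prev : nat) (w : seq site) : seq (nat * nat) :=
  match w with
  | [::] => [::]
  | s :: w' => let e := minn (sa s) (sb s) in (sb s - e + prev, sc s) :: basket_move e w'
  end.

(** Step 2: one ball at site j moves to the nearest site k > j having a
    currently unoccupied container (occupancy < capacity = 1 box + baskets). *)
Definition move_one (cap : seq nat) (j : nat) (occ : seq nat) : seq nat :=
  let k := j.+1 + find (fun k => nth 0 occ k < nth 0 cap k) (iota j.+1 (size cap - j.+1)) in
  set_nth 0 (set_nth 0 occ k (nth 0 occ k).+1) j (nth 0 occ j).-1.

(** Balls are taken one at a time from left to right; each original ball
    moves exactly once. *)
Definition move_balls (orig cap : seq nat) : seq nat :=
  foldl (fun occ j => iter (nth 0 orig j) (move_one cap j) occ) orig (iota 0 (size orig)).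

(** T_infty applied to the finite window w (everything to the left of the
    window is V, hence inert).  The window is padded on the right by enough
    V's that every basket and ball stays inside it. *)
Definition Tword (w : seq site) : seq site :=
  let w' := w ++ nseq (sumn (map sc w)).+2 V in
  let bc := basket_move 0 w' in
  let b' := map fst bc in
  let c := map snd bc in
  let c' := move_balls c (map S b') in
  [seq (x.1 + 1 - x.2, x.1, x.2) | x <- zip b' c'].

Definition Tinf_at (A : seq site) (p : int) : int -> site := at_ (Tword A) p.

Definition is_soliton (A : seq site) (v : nat) : Prop :=
  [/\ all wf_site A, head V A != V, last V A != V, 0 < v &
      forall p : int, Tinf_at A p =1 at_ A (p + v%:Z)%R].

Definition is_basic (A : seq site) (v : nat) : Prop :=
  is_soliton A v /\
  ~ (exists (A' A'' : seq site) (j v' v'' : nat),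
        [/\ A = A' ++ nseq j V ++ A'', v <= j, A' != [::] & A'' != [::]] /\
        is_soliton A' v' /\ is_soliton A'' v'').

Definition isB (s : site) : Prop := exists a, 0 < a /\ s = B a.
Definition isU (s : site) : Prop := exists a, 0 < a /\ s = U a.

Definition slow_word (A : seq site) : Prop :=
  [/\ A <> [::],
      (forall i, i < size A -> nth V A i = F \/ isB (nth V A i) \/ isU (nth V A i)) &
      (forall i, i.+1 < size A -> nth V A i = F ->
         ~ (nth V A i.+1 = F \/ isU (nth V A i.+1)))].

From mathcomp Require Import all_boot all_order all_algebra zify.

(** T_infty is computed by a left-to-right sweep remembering two numbers:
    the empty baskets arriving from the previous site and the balls in
    transit.  Counting baskets shows that all baskets of a soliton
    are empty, so its letters are V, F, B_a and U_a ([soliton_letters]).  Finally a soliton of speed [v >= 2] is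
    F^v or splits after F^v V^v ([fast_case]), and a soliton of speed one is
    a slow word or splits at its first V ([slow_case]); since a word without
    V cannot split, the basic solitons are exactly F^k and the slow words. *)

Definition psum (f : nat -> nat) (k : nat) : nat := \sum_(i < k) f i.

Lemma psumS f k : psum f k.+1 = psum f k + f k.
Proof. by rewrite /psum big_ord_recr. Qed.

Lemma psum_mono f {a b : nat} : a <= b -> psum f a <= psum f b.
Proof.
move=> /subnK <-; elim: (b - a) => [|d IH]; first by rewrite add0n.
by rewrite addSn psumS (leq_trans IH) ?leq_addr.
Qed.

Lemma psum_ext f g k : (forall i, i < k -> f i = g i) -> psum f k = psum g k.
Proof. by move=> fg; apply: eq_bigr => i _; apply: fg. Qed.

Lemma psum_lb f a b : a <= b -> (forall k, a <= k < b -> 0 < f k) ->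
  b - a <= psum f b - psum f a.
Proof.
elim: b => [|b IH] ab fpos; first by rewrite sub0n.
case: (ltngtP a b.+1) => [ab1||->]; [|lia|by rewrite subnn].
have := IH ab1 (fun k kb => fpos k ltac:(lia)); have := fpos b ltac:(lia).
have := @psum_mono f a b ab1; rewrite psumS; lia.
Qed.

Lemma psum_nth {T : Type} (x0 : T) (f : T -> nat) (l : seq T) :
  psum (fun i => f (nth x0 l i)) (size l) = sumn (map f l).
Proof. by rewrite sumnE big_map (big_nth x0) big_mkord. Qed.

Lemma find_first (T : Type) (a : pred T) (s : seq T) x0 i :
  i < size s -> a (nth x0 s i) -> (forall i', i' < i -> ~~ a (nth x0 s i')) ->
  find a s = i.
Proof.
move=> i_lt ai before.
have has_a : has a s by apply/(has_nthP x0); exists i.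
case: (ltngtP (find a s) i) => // lt_find.
- by have := before _ lt_find; rewrite nth_find.
- by have := before_find x0 lt_find; rewrite ai.
Qed.

(** The final occupancies are given by a carry recursion: [carry j]
    balls are in transit when the sweep reaches site [j], and
    [landed j = minn (carry j) (room j)] of them stay there. *)
Section GreedyFilling.
Variables orig cap : seq nat.

Definition room (k : nat) : nat := nth 0 cap k - nth 0 orig k.
Definition room_upto (k : nat) : nat := psum room k.

Fixpoint carry (j : nat) : nat :=
  if j is j'.+1 then carry j' - minn (carry j') (room j') + nth 0 orig j' else 0.

Definition landed (j : nat) : nat := minn (carry j) (room j).

(** How many of [Y] balls, filling greedily the room of the sites from [j] on,
    end at site [k]. *)
Definition fill (Y j k : nat) : nat :=
  minn Y (room_upto k.+1 - room_upto j) - minn Y (room_upto k - room_upto j).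

Lemma carry_le j : carry j <= psum (nth 0 orig) j.
Proof. by elim: j => [|j IH] //=; rewrite psumS; lia. Qed.

Lemma move_one_first j k0 occ :
  j < k0 < size cap -> nth 0 occ k0 < nth 0 cap k0 ->
  (forall k, j < k < k0 -> nth 0 cap k <= nth 0 occ k) ->
  move_one cap j occ =
  set_nth 0 (set_nth 0 occ k0 (nth 0 occ k0).+1) j (nth 0 occ j).-1.
Proof.
move=> /andP [jk0 k0L] free_k0 full.
rewrite /move_one (@find_first _ _ _ 0 (k0 - j.+1)).
- by rewrite subnKC.
- by rewrite size_iota; lia.
- by rewrite nth_iota ?subnKC //; lia.
- move=> i lt_i; rewrite nth_iota; last lia.
  by rewrite -leqNgt; apply: full; lia.
Qed.

Lemma move_one_fill j occ Y :
  size occ = size cap -> j < size cap ->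
  Y < room_upto (size cap) - room_upto j.+1 ->
  (forall k, j < k < size cap -> nth 0 occ k = nth 0 orig k + fill Y j.+1 k) ->
  [/\ size (move_one cap j occ) = size cap,
      nth 0 (move_one cap j occ) j = (nth 0 occ j).-1,
      (forall k, k < j -> nth 0 (move_one cap j occ) k = nth 0 occ k) &
      (forall k, j < k < size cap ->
         nth 0 (move_one cap j occ) k = nth 0 orig k + fill Y.+1 j.+1 k)].
Proof.
move=> size_occ jL Y_lt occ_fill.
set L := size cap in jL Y_lt occ_fill *.
have room_uptoS k : room_upto k.+1 = room_upto k + room k by exact: psumS.
have room_upto_mono a b : a <= b -> room_upto a <= room_upto b by exact: psum_mono.
(* some room is left after [j], so [j] is not the last site *)
have jL1 : j < L.-1.
  by case: (ltnP j L.-1) => // Lj; have := room_upto_mono L j.+1 ltac:(lia); lia.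
have ex_k0 : exists k, (j < k) && (Y < room_upto k.+1 - room_upto j.+1).
  by exists L.-1; rewrite jL1 prednK //; lia.
case: (ex_minnP ex_k0) => k0 /andP [jk0 Yk0] k0_min.
have k0L : k0 < L.
  by have := k0_min L.-1; rewrite jL1 prednK ?Y_lt //; [move/(_ isT); lia | lia].
have full_before k : j < k < k0 -> room_upto k.+1 - room_upto j.+1 <= Y.
  move=> /andP [jk kk0]; rewrite leqNgt; apply/negP => Yk.
  by have := k0_min k; rewrite jk Yk /= => /(_ isT); lia.
have Y_k0 : room_upto k0 - room_upto j.+1 <= Y.
  case: (ltnP j.+1 k0) => [jk0'|k0j]; last by rewrite (_ : k0 = j.+1) ?subnn //; lia.
  by have := full_before k0.-1; rewrite prednK; [apply; lia | lia].
have room_j_k0 := room_upto_mono j.+1 k0 jk0.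
rewrite (@move_one_first j k0) ?jk0 //; first last.
- move=> k /andP [jk kk0]; rewrite occ_fill ?jk; last lia.
  have := full_before k ltac:(lia); have := room_uptoS k.
  have := room_upto_mono j.+1 k jk.
  by rewrite /fill /room; lia.
- by rewrite occ_fill ?jk0 //; have := room_uptoS k0; rewrite /fill /room; lia.
split.
- by rewrite !size_set_nth; lia.
- by rewrite nth_set_nth /= eqxx.
- move=> k kj; rewrite !nth_set_nth /= (ltn_eqF kj) nth_set_nth /=.
  by have -> : (k == k0) = false by apply/eqP; lia.
- move=> k /andP [jk kL]; rewrite !nth_set_nth /= (gtn_eqF jk) nth_set_nth /=.
  rewrite /fill; case: (ltngtP k k0) => [kk0|k0k|->].
  + rewrite occ_fill ?jk //; have := full_before k ltac:(lia); have := room_uptoS k.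
    have := room_upto_mono j.+1 k jk; rewrite /fill; lia.
  + rewrite occ_fill ?jk //; have := room_upto_mono k0.+1 k k0k; rewrite /fill; lia.
  + by rewrite occ_fill ?jk0 //; rewrite /fill; lia.
Qed.

(** The [X] balls passing site [j] first fill its room, the rest go on. *)
Lemma fill_shift X j k : j < k -> fill X j k = fill (X - minn X (room j)) j.+1 k.
Proof.
move=> jk; have := psum_mono room jk; have := psum_mono room (ltnW jk).
by rewrite /fill /room_upto psumS; lia.
Qed.

Lemma room_from_padding n : n <= size cap ->
  (forall k, n <= k < size cap -> nth 0 orig k = 0 /\ 0 < room k) ->
  psum (nth 0 orig) n <= size cap - n ->
  forall j, j < size cap -> 0 < nth 0 orig j ->
    carry j.+1 <= room_upto (size cap) - room_upto j.+1.
Proof.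
move=> nL pad few j jL orig_j.
have jn : j < n by case: (ltnP j n) => // nj; have [] := pad j; [lia | lia].
have := carry_le j.+1; have := psum_mono (nth 0 orig) jn.
have := psum_mono room jn.
have := @psum_lb room n (size cap) nL (fun k kn => (pad k kn).2).
rewrite /room_upto; lia.
Qed.

(** Invariant of the sweep before site [j]: the sites [< j] hold their final
    number of balls, and the [carry j] balls that have passed site [j] fill
    greedily the room of the sites from [j] on. *)
Definition sweep_inv (j : nat) (occ : seq nat) : Prop :=
  [/\ size occ = size cap,
      forall k, k < j -> nth 0 occ k = landed k &
      forall k, j <= k < size cap -> nth 0 occ k = nth 0 orig k + fill (carry j) j k].

Hypothesis size_orig : size orig = size cap.
Hypothesis enough_room : forall j, j < size cap -> 0 < nth 0 orig j ->
  carry j.+1 <= room_upto (size cap) - room_upto j.+1.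

Lemma move_site_balls j occ t :
  j < size cap -> sweep_inv j occ -> t <= nth 0 orig j ->
  let occ' := iter t (move_one cap j) occ in
  [/\ size occ' = size cap,
      (forall k, k < j -> nth 0 occ' k = landed k),
      nth 0 occ' j = nth 0 orig j + landed j - t &
      (forall k, j < k < size cap ->
         nth 0 occ' k = nth 0 orig k + fill (carry j - landed j + t) j.+1 k)].
Proof.
move=> jL [size_occ occ_lo occ_hi]; elim: t => [|t IH] t_le /=.
- split => // [|k /andP [jk kL]].
  + by rewrite occ_hi ?leqnn // /fill /room_upto psumS subnn /landed; lia.
  + by rewrite occ_hi ?(ltnW jk) // addn0 fill_shift.
- have [size1 lo1 j1 hi1] := IH (ltnW t_le).
  have [] := @move_one_fill j _ (carry j - landed j + t) size1 jL _ hi1.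
    by have := enough_room _ jL ltac:(lia); rewrite /= /landed; lia.
  move=> size2 j2 lo2 hi2; split => //.
  + by move=> k kj; rewrite lo2 ?lo1.
  + by rewrite j2 j1; lia.
  + by move=> k kjL; rewrite hi2 // addnS.
Qed.

Lemma move_balls_landed :
  size (move_balls orig cap) = size cap /\
  forall k, k < size cap -> nth 0 (move_balls orig cap) k = landed k.
Proof.
have sweep j : j <= size cap -> sweep_inv j
    (foldl (fun occ j => iter (nth 0 orig j) (move_one cap j) occ) orig (iota 0 j)).
  elim: j => [|j IH] jL.
    by split => //= k _; rewrite /fill /room_upto /psum big_ord0; lia.
  rewrite -addn1 iotaD foldl_cat /= add0n.
  have [size1 lo1 j1 hi1] := @move_site_balls j _ _ jL (IH (ltnW jL)) (leqnn _).
  split => // [k kj|k /andP [jk kL]].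
  + case: (ltngtP k j) => [kj'||->]; [exact: lo1 | lia | by rewrite j1; lia].
  + by rewrite hi1 ?addn1 //; lia.
by have [? lo _] := sweep _ (leqnn _); rewrite /move_balls size_orig.
Qed.

End GreedyFilling.

(** T_infty as a transducer.  Sweeping a configuration from the left, one only
    needs to remember two numbers: the empty baskets [E] arriving from the
    previous site and the balls [K] in transit. *)
Definition empties (s : site) : nat := minn (sa s) (sb s).

Definition baskets_after (E : nat) (s : site) : nat := sb s - empties s + E.

Definition dropped (E K : nat) (s : site) : nat :=
  minn K ((baskets_after E s).+1 - sc s).

Definition out_site (st : nat * nat) (s : site) : site :=
  (baskets_after st.1 s + 1 - dropped st.1 st.2 s, baskets_after st.1 s,
   dropped st.1 st.2 s).

Definition next_state (st : nat * nat) (s : site) : nat * nat :=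
  (empties s, st.2 - dropped st.1 st.2 s + sc s).

Fixpoint state (s : nat -> site) (i : nat) : nat * nat :=
  if i is i'.+1 then next_state (state s i') (s i') else (0, 0).

Definition Tseq (s : nat -> site) (i : nat) : site := out_site (state s i) (s i).

Lemma stateS s m : state s m.+1 = next_state (state s m) (s m).
Proof. by []. Qed.

Lemma state_fst s i : (state s i).1 = if i is i'.+1 then empties (s i') else 0.
Proof. by case: i. Qed.

Lemma state_snd_le s k : (state s k).2 <= psum (fun i => sc (s i)) k.
Proof. by elim: k => [|k IH] //=; rewrite psumS /next_state /=; lia. Qed.

Lemma state_ext {s s' : nat -> site} : s =1 s' -> state s =1 state s'.
Proof. by move=> ss'; elim=> [|i IH] //=; rewrite IH ss'. Qed.

Lemma Tseq_ext {s s' : nat -> site} : s =1 s' -> Tseq s =1 Tseq s'.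
Proof. by move=> ss' i; rewrite /Tseq (state_ext ss') ss'. Qed.

Lemma Tseq_from_rest {s : nat -> site} {m0 : nat} : state s m0 = (0, 0) ->
  forall i, Tseq s (m0 + i) = Tseq (fun k => s (m0 + k)) i.
Proof.
move=> st0; have st i : state s (m0 + i) = state (fun k => s (m0 + k)) i.
  by elim: i => [|i IH]; rewrite ?addn0 // addnS /= IH.
by move=> i; rewrite /Tseq st.
Qed.

Lemma basket_move_size p w : size (basket_move p w) = size w.
Proof. by elim: w p => [|x w IH] p //=; rewrite IH. Qed.

Lemma basket_move_nth p w i : i < size w ->
  nth (0, 0) (basket_move p w) i =
  (baskets_after (if i is i'.+1 then empties (nth V w i') else p) (nth V w i),
   sc (nth V w i)).
Proof. by elim: w p i => [|x w IH] p [|i] //= iw; rewrite IH //; case: i iw. Qed.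

Lemma nth_pad (A : seq site) M i : nth V (A ++ nseq M V) i = nth V A i.
Proof.
rewrite nth_cat; case: ltnP => // Ai.
by rewrite nth_nseq (nth_default _ Ai); case: ifP.
Qed.

(** Each V site beyond the word absorbs at least one ball in transit, so the
    padding of [Tword] is long enough for the image to end with V's. *)
Lemma Tseq_tail (A : seq site) i : size A + (sumn (map sc A)).+2 <= i ->
  Tseq (nth V A) i = V.
Proof.
set s := nth V A; set n := size A; set N := sumn (map sc A) => ni.
have sV k : n <= k -> s k = V by move=> nk; rewrite /s nth_default.
have balls : psum (fun k => sc (s k)) n = N by exact: psum_nth.
have carried t : (state s (n + t)).2 <= N - t.
  elim: t => [|t IH]; first by rewrite addn0 subn0 -balls state_snd_le.
  rewrite addnS /= /next_state /= sV ?leq_addr // /dropped /baskets_after /=.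
  by move: IH; rewrite /empties /=; lia.
have K0 : (state s i).2 = 0 by have := carried (i - n); rewrite subnKC; lia.
have E0 : (state s i).1 = 0.
  by rewrite state_fst; case: i ni {K0} => [|i] ni; [lia | rewrite sV //; lia].
by rewrite /Tseq /out_site /dropped /baskets_after E0 K0 sV //; lia.
Qed.

Lemma Tword_nth (A : seq site) i : nth V (Tword A) i = Tseq (nth V A) i.
Proof.
set s := nth V A; set n := size A; set N := sumn (map sc A).
rewrite /Tword -/N; set w := A ++ nseq N.+2 V.
have w_s k : nth V w k = s k by rewrite nth_pad.
set bc := basket_move 0 w; set b' := map fst bc; set c := map snd bc.
set cap := map S b'.
have size_w : size w = n + N.+2 by rewrite size_cat size_nseq.
have size_b' : size b' = size w by rewrite size_map basket_move_size.
have size_c : size c = size cap by rewrite !size_map.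
have size_cap : size cap = size w by rewrite size_map.
have bc_k k : k < size w ->
    nth (0, 0) bc k = (baskets_after (state s k).1 (s k), sc (s k)).
  by move=> kw; rewrite basket_move_nth // state_fst; case: k kw => [|k] kw; rewrite !w_s.
have b'_k k : k < size w -> nth 0 b' k = baskets_after (state s k).1 (s k).
  by move=> kw; rewrite (nth_map (0, 0)) ?bc_k ?basket_move_size.
have c_k k : k < size w -> nth 0 c k = sc (s k).
  by move=> kw; rewrite (nth_map (0, 0)) ?bc_k ?basket_move_size.
have cap_k k : k < size w -> nth 0 cap k = (baskets_after (state s k).1 (s k)).+1.
  by move=> kw; rewrite (nth_map 0) ?b'_k ?size_b'.
have carry_k k : k <= size w -> carry c cap k = (state s k).2.
  elim: k => [|k IH] kw //=; rewrite IH; last lia.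
  by rewrite /next_state /dropped /room cap_k ?c_k //; lia.
have enough : forall j, j < size cap -> 0 < nth 0 c j ->
    carry c cap j.+1 <= room_upto c cap (size cap) - room_upto c cap j.+1.
  apply: (@room_from_padding _ _ n); rewrite size_cap; first lia.
  - move=> k /andP [nk kw]; rewrite /room cap_k // c_k // /s nth_default //=; lia.
  - rewrite (@psum_ext _ (fun k => sc (nth V A k))) ?psum_nth; first lia.
    by move=> k kn; rewrite c_k //; lia.
have [size_m landed_m] := @move_balls_landed c cap size_c enough.
case: (ltnP i (size w)) => iw.
- rewrite (nth_map (0, 0)); last by rewrite size_zip size_b' size_m size_cap minnn.
  rewrite nth_zip /=; last by rewrite size_b' size_m size_cap.
  rewrite landed_m ?size_cap // b'_k // /landed carry_k; last lia.
  by rewrite /room cap_k // c_k.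
- rewrite nth_default; last by rewrite size_map size_zip size_b' size_m size_cap minnn.
  by rewrite Tseq_tail //; lia.
Qed.

Lemma at_nat (X : seq site) (p i : int) :
  at_ X p i = if (p <= i)%R then nth V X (absz (i - p)%R) else V.
Proof.
rewrite /at_; case: (boolP (p <= i)%R) => pi //=.
by case: (boolP (i < p + (size X)%:Z)%R) => // iX; rewrite nth_default //; lia.
Qed.

Definition shifts (s : nat -> site) (v : nat) : Prop :=
  forall m, Tseq s m = if m < v then V else s (m - v).

Lemma soliton_iff A v : is_soliton A v <->
  [/\ all wf_site A, head V A != V, last V A != V, 0 < v & shifts (nth V A) v].
Proof.
split=> -[wfA hA lA v_gt0 T_A]; split=> //; [move=> m | move=> p i].
- have := T_A 0%R (Posz m); rewrite /Tinf_at !at_nat Tword_nth.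
  have -> : (0 <= Posz m)%R = true by lia.
  have -> : absz (Posz m - 0)%R = m by lia.
  case: (ltnP m v) => mv.
  + by have -> : (0 + Posz v <= Posz m)%R = false by lia.
  + have -> : (0 + Posz v <= Posz m)%R = true by lia.
    by have -> : absz (Posz m - (0 + Posz v))%R = (m - v)%N by lia.
- rewrite /Tinf_at !at_nat; case: (boolP (p <= i)%R) => pi; last first.
    by have -> : (p + Posz v <= i)%R = false by lia.
  rewrite Tword_nth T_A; case: (ltnP (absz (i - p)%R) v) => iv.
  + by have -> : (p + Posz v <= i)%R = false by lia.
  + have -> : (p + Posz v <= i)%R = true by lia.
    by have -> : absz (i - (p + Posz v))%R = (absz (i - p)%R - v)%N by lia.
Qed.

Lemma soliton_shifts {A : seq site} {v : nat} :
  is_soliton A v -> shifts (nth V A) v.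
Proof. by case/soliton_iff. Qed.

Section Shifts.
Context {s : nat -> site} {v : nat}.
Hypothesis s_shifts : shifts s v.

Lemma shifts_baskets m :
  baskets_after (state s m).1 (s m) = if m < v then 0 else sb (s (m - v)).
Proof. by have := congr1 sb (s_shifts m); rewrite /Tseq /out_site /=; case: ifP. Qed.

Lemma shifts_balls m :
  dropped (state s m).1 (state s m).2 (s m) = if m < v then 0 else sc (s (m - v)).
Proof. by have := congr1 sc (s_shifts m); rewrite /Tseq /out_site /=; case: ifP. Qed.

Hypothesis v_gt0 : 0 < v.

(** Counting baskets on the sites [0..m]: only the empty baskets of site [m]
    leave, and what remains is the shifted count on [0..m-v]. *)
Lemma shifts_basket_count m :
  empties (s m) + psum (fun i => sb (s i)) (m.+1 - v) = psum (fun i => sb (s i)) m.+1.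
Proof.
set S := psum (fun i => sb (s i)).
have S0 : S 0 = 0 by rewrite /S /psum big_ord0.
have SS k : S k.+1 = S k + sb (s k) by rewrite /S psumS.
have le_b k : empties (s k) <= sb (s k) by rewrite /empties; lia.
elim: m => [|m IH].
  have := shifts_baskets 0; rewrite v_gt0 /baskets_after /= SS S0.
  have -> : 1 - v = 0 by lia.
  by rewrite S0; have := le_b 0; lia.
have b_m := shifts_baskets m.+1; rewrite state_fst /baskets_after in b_m.
have := le_b m.+1; rewrite SS.
case: (boolP (m.+1 < v)) => mv; rewrite ?mv ?(negbTE mv) in b_m.
- have -> : m.+2 - v = 0 by lia.
  move: IH; have -> : m.+1 - v = 0 by lia.
  by rewrite S0; lia.
- have -> : m.+2 - v = (m.+1 - v).+1 by lia.
  by rewrite SS; lia.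
Qed.

Lemma shifts_all_empty m : empties (s m) = sb (s m).
Proof.
have := shifts_basket_count m; have := @psum_mono (fun i => sb (s i)) (m.+1 - v) m.
rewrite psumS /empties; lia.
Qed.

End Shifts.

Definition letter (x : site) : Prop := x = V \/ x = F \/ isB x \/ isU x.

Lemma wf_site_eq {x : site} : wf_site x -> x = (sb x + 1 - sc x, sb x, sc x).
Proof.
by case: x => [[a b] c]; rewrite /wf_site /sa /sb /sc /= => /eqP wf; congr (_, _, _); lia.
Qed.

Lemma letter_of {x : site} : wf_site x -> empties x = sb x -> letter x.
Proof.
move=> wf_x; rewrite [in letter x](wf_site_eq wf_x); move: wf_x.
case: x => [[a b] c]; rewrite /wf_site /empties /sa /sb /sc /= => /eqP wf_x e_x.
case: (posnP b) => [->|b_gt0]; case: (posnP c) => [->|c_gt0].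
- by left.
- by right; left; rewrite (_ : c = 1) //; lia.
- by right; right; left; exists b; split => //; rewrite /B; congr (_, _, _); lia.
- by right; right; right; exists b; split => //; rewrite /U; congr (_, _, _); lia.
Qed.

Lemma letter_facts {x : site} :
  letter x -> [/\ wf_site x, empties x = sb x & sc x <= 1].
Proof.
by case=> [->|[->|[[a [a_gt0 ->]]|[a [a_gt0 ->]]]]];
  rewrite /wf_site /empties /sa /sb /sc /=; split => //; try lia; apply/eqP; lia.
Qed.

Lemma letter_F {x : site} : letter x -> sb x = 0 -> sc x = 1 -> x = F.
Proof.
by case=> [->|[->|[[a [a_gt0 ->]]|[a [a_gt0 ->]]]]]; rewrite /sb /sc /=; try lia.
Qed.

Lemma letter_noball {x : site} : letter x -> ~ (x = F \/ isU x) -> sc x = 0.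
Proof.
case=> [->|[->|[[a [a_gt0 ->]]|[a [a_gt0 ->]]]]] not_FU //; case: not_FU.
- by left.
- by right; exists a.
Qed.

Lemma slow_letter_neqV {x : site} : x = F \/ isB x \/ isU x -> x != V.
Proof. by case=> [->|[[a [a_gt0 ->]]|[a [a_gt0 ->]]]] //; apply/eqP => -[]; lia. Qed.

Lemma wf_nth {A : seq site} i : all wf_site A -> wf_site (nth V A i).
Proof.
move=> wfA; case: (ltnP i (size A)) => iA; last by rewrite nth_default.
exact: (all_nthP V wfA).
Qed.

Lemma soliton_letters {A : seq site} {v : nat} :
  is_soliton A v -> forall m, letter (nth V A m).
Proof.
move=> /soliton_iff [wfA _ _ v_gt0 A_shifts] m.
exact: letter_of (wf_nth m wfA) (shifts_all_empty A_shifts v_gt0 m).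
Qed.

(** F^k is shifted by k: the k balls are all in transit over the next k sites,
    which receive them one by one. *)
Lemma fast_shift k : 0 < k -> shifts (nth V (nseq k F)) k.
Proof.
move=> k_gt0; set s := nth V (nseq k F).
have s_m m : s m = if m < k then F else V by rewrite /s nth_nseq.
have state_m m : state s m = (0, minn m (k + k - m)).
  elim: m => [|m IH] /=; first by rewrite min0n.
  rewrite IH /next_state /dropped /baskets_after /= s_m.
  by case: (ltnP m k) => mk; rewrite /empties /sa /sb /sc /=; congr (_, _); lia.
move=> m; rewrite /Tseq state_m s_m /out_site /dropped /baskets_after /=.
case: (ltnP m k) => mk; rewrite /empties /sa /sb /sc /=.
- by rewrite /V; congr (_, _, _); lia.
- rewrite s_m; case: (ltnP (m - k) k) => mk2.
  + by rewrite /F; congr (_, _, _); lia.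
  + by rewrite /V; congr (_, _, _); lia.
Qed.

(** A word of letters without the factors FF and FU_a is shifted by one site:
    after site [m] the sweep carries exactly the baskets and the balls of
    site [m], each of which moves one step to the right. *)
Lemma slow_shift s : (forall i, letter (s i)) ->
  (forall i, s i = F -> ~ (s i.+1 = F \/ isU (s i.+1))) -> shifts s 1.
Proof.
move=> s_letter no_FF.
have fits m : (if m is m'.+1 then sc (s m') else 0) <=
    (if m is m'.+1 then sb (s m') else 0) + 1 - sc (s m).
  case: m => [|m] /=; first by have [_ _] := letter_facts (s_letter 0); lia.
  have [_ _ c_m] := letter_facts (s_letter m).
  have [_ _ c_m1] := letter_facts (s_letter m.+1).
  case: (posnP (sb (s m))) => b_m; last by lia.
  case: (posnP (sc (s m))) => c_m0; first by lia.
  have s_mF := letter_F (s_letter m) b_m ltac:(lia).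
  by have := letter_noball (s_letter m.+1) (no_FF m s_mF); lia.
have state_m m : state s m = (if m is m'.+1 then sb (s m') else 0,
                              if m is m'.+1 then sc (s m') else 0).
  elim: m => [|m IH] //; rewrite /= IH /next_state /dropped /baskets_after /=.
  have [_ -> _] := letter_facts (s_letter m); rewrite subnn add0n.
  by have := fits m; case: m {IH} => [|m] /= fits_m; congr (_, _); lia.
move=> m; rewrite /Tseq state_m /out_site /dropped /baskets_after /=.
have [_ -> _] := letter_facts (s_letter m); rewrite subnn add0n.
have := fits m; case: m => [|m] /= fits_m; first by rewrite /V; congr (_, _, _); lia.
rewrite subn1 /=; have [wf_m _ _] := letter_facts (s_letter m).
rewrite [in RHS](wf_site_eq wf_m); congr (_, _, _); lia.
Qed.

Lemma fast_soliton k : 0 < k -> is_soliton (nseq k F) k.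
Proof.
move=> k_gt0; apply/soliton_iff; split => //; last exact: fast_shift.
- by apply/allP => x; rewrite mem_nseq => /andP [_ /eqP ->].
- by case: k k_gt0.
- by rewrite -nth_last nth_nseq size_nseq; case: k k_gt0 => // k _; rewrite /= ltnSn.
Qed.

Lemma slow_soliton A : slow_word A -> is_soliton A 1.
Proof.
case=> A_nil A_letters A_noFF.
have size_A : 0 < size A by case: A A_nil {A_letters A_noFF}.
have letter_i i : letter (nth V A i).
  by case: (ltnP i (size A)) => iA; [right; exact: A_letters | left; rewrite nth_default].
apply/soliton_iff; split => //.
- by apply/(all_nthP V) => i _; have [] := letter_facts (letter_i i).
- by rewrite -nth0; apply: slow_letter_neqV; exact: A_letters.
- by rewrite -nth_last; apply: slow_letter_neqV; apply: A_letters; lia.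
- apply: slow_shift => // i A_iF; case: (ltnP i.+1 (size A)) => iA; first exact: A_noFF.
  by rewrite (nth_default _ iA) => -[// | [a [_ []]]].
Qed.

Definition splits (A : seq site) (v : nat) : Prop :=
  exists (A' A'' : seq site) (j : nat),
    [/\ A = A' ++ nseq j V ++ A'', v <= j, A' != [::] & A'' != [::]] /\
    is_soliton A' v /\ is_soliton A'' v.

Lemma next_letter {A : seq site} {m0 : nat} : last V A != V -> m0 < size A ->
  exists m1, [/\ m0 <= m1 < size A, nth V A m1 != V &
                 forall k, m0 <= k < m1 -> nth V A k = V].
Proof.
move=> lA m0A.
have ex_m1 : exists k, (m0 <= k) && (nth V A k != V).
  by exists (size A).-1; rewrite nth_last lA andbT; lia.
case: (ex_minnP ex_m1) => m1 /andP [m0m1 m1V] m1_min; exists m1; split => //.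
- have : m1 <= (size A).-1 by apply: m1_min; rewrite nth_last lA andbT; lia.
  by rewrite m0m1 /=; lia.
- move=> k /andP [m0k km1]; apply/eqP; apply: contraTT km1 => kV.
  by rewrite -leqNgt; apply: m1_min; rewrite m0k.
Qed.

Lemma state_idle s a d : state s a = (0, 0) ->
  (forall k, a <= k < a + d -> s k = V) -> state s (a + d) = (0, 0).
Proof.
move=> st_a; elim: d => [|d IH] V_run; first by rewrite addn0.
rewrite addnS stateS IH => [|k /andP [ak kd]]; last by apply: V_run; lia.
by rewrite V_run //; lia.
Qed.

Lemma suffix_soliton A v m0 :
  is_soliton A v -> m0 < size A -> nth V A m0 != V -> state (nth V A) m0 = (0, 0) ->
  v <= m0 -> (forall k, m0 - v <= k < m0 -> nth V A k = V) ->
  is_soliton (drop m0 A) v.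
Proof.
move=> /soliton_iff [wfA _ lA v_gt0 A_shifts] m0A m0V st0 vm0 gapV.
apply/soliton_iff; split => //.
- by apply/(all_nthP V) => i _; rewrite nth_drop; exact: wf_nth.
- by rewrite -nth0 nth_drop addn0.
- rewrite -nth_last nth_drop size_drop.
  have -> : m0 + (size A - m0).-1 = (size A).-1 by lia.
  by rewrite nth_last.
- move=> m; rewrite (@Tseq_ext _ (fun k => nth V A (m0 + k))); last first.
    by move=> k; rewrite nth_drop.
  rewrite -(Tseq_from_rest st0) A_shifts.
  have -> : (m0 + m < v) = false by lia.
  case: (ltnP m v) => mv; first by apply: gapV; lia.
  by rewrite nth_drop; congr nth; lia.
Qed.

Lemma split_at_gap {A : seq site} {v m0 m1 : nat} :
  is_soliton A v -> 0 < m0 -> m0 + v <= m1 -> m1 < size A -> nth V A m1 != V ->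
  (forall k, m0 <= k < m1 -> nth V A k = V) -> state (nth V A) m1 = (0, 0) ->
  is_soliton (take m0 A) v -> splits A v.
Proof.
move=> A_sol m0_gt0 gap m1A m1V gapV st1 head_sol.
have m0A : m0 <= size A by lia.
exists (take m0 A), (drop m1 A), (m1 - m0); split; [split|split] => //.
- apply: (@eq_from_nth _ V).
    by rewrite !size_cat size_nseq size_drop size_takel; lia.
  move=> i _; rewrite nth_cat size_takel; last lia.
  case: (ltnP i m0) => im0; first by rewrite nth_take.
  rewrite nth_cat size_nseq nth_nseq; case: (ltnP (i - m0) (m1 - m0)) => im1.
  + by rewrite gapV //; lia.
  + by rewrite nth_drop; congr nth; lia.
- lia.
- by rewrite -size_eq0 -lt0n size_takel.
- by rewrite -size_eq0 -lt0n size_drop subn_gt0.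
- by apply: suffix_soliton => // [|k kk]; [lia | apply: gapV; lia].
Qed.

Section FastSolitons.
Context {A : seq site} {v : nat}.
Hypotheses (A_sol : is_soliton A v) (v_gt1 : 1 < v).
Local Notation s := (nth V A).

Let A_shifts : shifts s v := soliton_shifts A_sol.
Let all_empty m : empties (s m) = sb (s m) :=
  shifts_all_empty A_shifts (ltnW v_gt1) m.

(** There are no baskets at all: since the baskets are empty, the baskets of
    site [m] reappear at site [m + 1] only, so site [m] has as many baskets as
    site [m + 1 - v], which lies strictly to its left. *)
Lemma fast_no_baskets m : sb (s m) = 0.
Proof.
elim/ltn_ind: m => m IH; have := shifts_baskets A_shifts m.+1.
rewrite state_fst /baskets_after !all_empty subnn add0n.
by case: ltnP => // vm ->; apply: IH; lia.
Qed.

Lemma fast_balls_le1 m : sc (s m) <= 1.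
Proof. by have [] := letter_facts (soliton_letters A_sol m). Qed.

Lemma fast_F m : sc (s m) = 1 -> s m = F.
Proof. exact: letter_F (soliton_letters A_sol m) (fast_no_baskets m). Qed.

Lemma fast_V m : sc (s m) = 0 -> s m = V.
Proof.
move=> c_m; have [wf_m _ _] := letter_facts (soliton_letters A_sol m).
by rewrite (wf_site_eq wf_m) fast_no_baskets c_m.
Qed.

(** With no baskets, a site drops one of the balls in transit iff it is
    empty; the shift says which sites do so. *)
Lemma fast_dropped m :
  minn (state s m).2 (1 - sc (s m)) = if m < v then 0 else sc (s (m - v)).
Proof.
rewrite -(shifts_balls A_shifts m) /dropped /baskets_after state_fst all_empty.
by case: m => [|m]; rewrite ?all_empty !fast_no_baskets.
Qed.

Lemma fast_carry m :
  (state s m.+1).2 = (state s m).2 - minn (state s m).2 (1 - sc (s m)) + sc (s m).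
Proof.
rewrite /= /next_state /dropped /baskets_after state_fst all_empty.
by case: m => [|m]; rewrite ?all_empty !fast_no_baskets.
Qed.

Lemma fast_head {t : nat} :
  t <= v -> (state s t).2 = t /\ forall i, i < t -> sc (s i) = 1.
Proof.
elim: t => [|t IH] tv; first by split.
have [carry_t head_t] := IH (ltnW tv).
have c_t : sc (s t) = 1.
  case: (posnP t) => [t0|t_gt0].
  - have [_ hA _ _ _] := (soliton_iff A v).1 A_sol; subst t.
    have := fast_balls_le1 0; case: (posnP (sc (s 0))) => [c0|]; last lia.
    by move: hA; rewrite -nth0 fast_V ?eqxx.
  - by have := fast_dropped t; rewrite carry_t tv; have := fast_balls_le1 t; lia.
split; first by rewrite fast_carry carry_t c_t; lia.
by move=> i it; case: (ltngtP i t) => [it'|ti|->] //; [exact: head_t | lia].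
Qed.

Lemma fast_gap {t : nat} : t <= v ->
  (state s (v + t)).2 = v - t /\ forall i, i < t -> sc (s (v + i)) = 0.
Proof.
have [carry_v head_v] := fast_head (leqnn v).
elim: t => [|t IH] tv; first by rewrite addn0 carry_v subn0.
have [carry_t gap_t] := IH (ltnW tv).
have c_t : sc (s (v + t)) = 0.
  have := fast_dropped (v + t); rewrite carry_t ltnNge leq_addr /= addKn (head_v _ tv).
  by have := fast_balls_le1 (v + t); lia.
split; first by rewrite addnS fast_carry carry_t c_t; lia.
by move=> i it; case: (ltngtP i t) => [it'|ti|->] //; [exact: gap_t | lia].
Qed.

End FastSolitons.

Lemma fast_case {A : seq site} {v : nat} :
  is_soliton A v -> 1 < v -> A = nseq v F \/ splits A v.
Proof.
move=> A_sol v_gt1; have [_ _ lA v_gt0 _] := (soliton_iff A v).1 A_sol.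
have [_ head_c] := fast_head A_sol v_gt1 (leqnn v).
have [gap_carry gap_c] := fast_gap A_sol v_gt1 (leqnn v).
have head_F i : i < v -> nth V A i = F.
  by move=> iv; apply: (fast_F A_sol v_gt1); exact: head_c.
have gap_V i : v <= i < v + v -> nth V A i = V.
  move=> /andP [vi iv]; apply: (fast_V A_sol v_gt1).
  by rewrite -(subnKC vi) gap_c //; lia.
have vA : v <= size A.
  case: (leqP v (size A)) => // Av.
  by have := head_F v.-1 ltac:(lia); rewrite nth_default //; lia.
have prefix : take v A = nseq v F.
  apply: (@eq_from_nth _ V); rewrite size_takel ?size_nseq // => i iv.
  by rewrite nth_take // nth_nseq iv head_F.
case: (eqVneq (size A) v) => [Av|Av]; [left | right].
  by rewrite -prefix -Av take_size.
have vA' : v < size A by rewrite ltn_neqAle eq_sym Av vA.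
have [m1 [/andP [vm1 m1A] m1V gapV]] := next_letter lA vA'.
have vv_m1 : v + v <= m1.
  by case: (leqP (v + v) m1) => // m1vv; move: m1V; rewrite gap_V ?eqxx //; lia.
apply: (split_at_gap A_sol v_gt0 vv_m1 m1A m1V gapV); last first.
  by rewrite prefix; exact: fast_soliton.
have idle_vv : state (nth V A) (v + v) = (0, 0).
  rewrite [LHS]surjective_pairing gap_carry subnn state_fst.
  have -> : v + v = (v + v).-1.+1 by lia.
  by rewrite /= gap_V //; lia.
rewrite -(subnKC vv_m1); apply: state_idle idle_vv _ => k /andP [vvk km1].
by apply: gapV; lia.
Qed.

Section SlowSolitons.
Context {A : seq site}.
Hypothesis A_sol : is_soliton A 1.
Local Notation s := (nth V A).

Let A_shifts : shifts s 1 := soliton_shifts A_sol.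
Let all_empty m : empties (s m) = sb (s m) := shifts_all_empty A_shifts (ltn0Sn 0) m.

Lemma slow_state m : state s m.+1 = (sb (s m), sc (s m)).
Proof.
elim: m => [|m IH]; first by rewrite stateS /next_state all_empty /dropped min0n.
have drop_m := shifts_balls A_shifts m.+1; rewrite IH subn1 /= in drop_m.
by rewrite stateS IH /next_state all_empty drop_m subnn.
Qed.

(** The ball of an F has no room at a following F or U_a. *)
Lemma slow_no_FF i : s i = F -> ~ (s i.+1 = F \/ isU (s i.+1)).
Proof.
move=> s_iF FU; have c_i1 : sc (s i.+1) = 1 by case: FU => [->|[a [_ ->]]].
have := shifts_balls A_shifts i.+1; rewrite slow_state s_iF /= subn1 /= s_iF.
by rewrite /dropped /baskets_after all_empty subnn add0n c_i1.
Qed.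

Lemma slow_prefix m : 0 < m <= size A -> (forall k, k < m -> s k != V) ->
  slow_word (take m A).
Proof.
move=> /andP [m_gt0 mA] notV; split.
- by move=> /(congr1 size); rewrite size_takel //=; lia.
- move=> i; rewrite size_takel // => im; rewrite nth_take //.
  case: (soliton_letters A_sol i) => [s_iV|//].
  by case/negP: (notV i im); apply/eqP.
- move=> i; rewrite size_takel // => im; rewrite !nth_take //; last lia.
  exact: slow_no_FF.
Qed.

End SlowSolitons.

Lemma slow_case {A : seq site} : is_soliton A 1 -> slow_word A \/ splits A 1.
Proof.
move=> A_sol; have [_ hA lA _ _] := (soliton_iff A 1).1 A_sol.
have A_gt0 : 0 < size A by case: A hA {A_sol lA}.
case: (boolP (V \in A)) => VA; [right | left]; last first.
  rewrite -(take_size A); apply: slow_prefix => //; first by rewrite A_gt0 /=.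
  by move=> k kA; apply: contraNneq VA => <-; exact: mem_nth.
set m0 := index V A.
have m0A : m0 < size A by rewrite index_mem.
have m0V : nth V A m0 = V by rewrite nth_index.
have before_m0 k : k < m0 -> nth V A k != V.
  move=> km0; apply/eqP => kV.
  by have := @index_nth _ V k A (ltn_trans km0 m0A); rewrite kV -/m0; lia.
have m0_gt0 : 0 < m0 by case: (posnP m0) hA => // m0_0; rewrite -nth0 -m0_0 m0V eqxx.
have [m1 [/andP [m0m1 m1A] m1V gapV]] := next_letter lA m0A.
have m0_m1 : m0 + 1 <= m1.
  by rewrite addn1 ltn_neqAle m0m1 andbT; apply: contraNneq m1V => <-; rewrite m0V.
apply: (split_at_gap A_sol m0_gt0 m0_m1 m1A m1V gapV).
- have m1_gt0 : 0 < m1 by lia.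
  by rewrite -(prednK m1_gt0) (slow_state A_sol) gapV //; lia.
- by apply/slow_soliton/slow_prefix => //; rewrite m0_gt0 ltnW.
Qed.

Lemma basic_unsplit {A : seq site} {v : nat} : is_basic A v -> ~ splits A v.
Proof.
case=> _ basic [A' [A'' [j [eqA [sol' sol'']]]]].
by apply: basic; exists A', A'', j, v, v.
Qed.

Lemma basic_of_noV A v : is_soliton A v -> V \notin A -> is_basic A v.
Proof.
move=> A_sol noV; split => // -[A' [A'' [j [v' [v'' [[eqA vj _ _] _]]]]]].
have v_gt0 : 0 < v by case: A_sol.
by move: noV; rewrite eqA !mem_cat mem_nseq eqxx andbT (leq_trans v_gt0 vj) orbT.
Qed.

Lemma slow_word_noV A : slow_word A -> V \notin A.
Proof.
case=> _ letters _; apply/negP => /(nthP V) [i iA A_iV].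
by have := slow_letter_neqV (letters i iA); rewrite A_iV eqxx.
Qed.

Theorem mainTheorem5 (A : seq site) (v : nat) :
  is_basic A v <->
  ((exists k : nat, 0 < k /\ A = nseq k F /\ v = k) \/ (slow_word A /\ v = 1)).
Proof.
split=> [A_basic | [[k [k_gt0 [-> ->]]] | [A_slow ->]]].
- have [A_sol _] := A_basic; have v_gt0 : 0 < v by case: A_sol.
  have unsplit := basic_unsplit A_basic.
  have [v_lt1 | v_gt1 | v1] := ltngtP v 1; first lia.
  + by left; exists v; do 2!split => //; case: (fast_case A_sol v_gt1).
  + by right; subst v; case: (slow_case A_sol).
- apply: basic_of_noV; first exact: fast_soliton.
  by rewrite mem_nseq; case: (0 < k).
- by apply: basic_of_noV; [exact: slow_soliton | exact: slow_word_noV].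
Qed.
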